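(* Let ${\bold H}$ be a function with domain $\omega$ whose values ${\bold H}(i)$ are countable sets with at least two elements, and let $\bar n\in\mathbf{N}$. Then (1) $\mathbb{Q}^{\bold H}_{\bar n}$ is a forcing notion (i.e. its order is a preorder), and (2) for $p,q\in\mathbb{Q}^{\bold H}_{\bar n}$, $p\leq q$ holds if and only if $w^p\subseteq w^q$ and for each $i\in\omega$ either there is $j\in\omega$ with $\sigma^q_j\subseteq\sigma^p_i$, or there is $m\in\mathrm{dom}(w^q)\cap\mathrm{dom}(\sigma^p_i)$ with $w^q(m)\neq\sigma^p_i(m)$.
   Context: $\mathbf{N}$ is the set of sequences $\bar n=\langle n^0_m,n^1_m:m<\omega\rangle$ of integers with $4<n^0_m\leq n^1_m<n^0_{m+1}$ for all $m$, $2^{2(m^*+2)}\sum_{m<m^*}n^0_m n^1_m<n^0_{m^*}$ for every $m^*\in\omega$, and $\lim_{m\to\infty}(n^1_m)^{1/(2n^0_m)}=\infty$. Conditions of $\mathbb{Q}^{\bold H}_{\bar n}$ are sequences $p=(w^p,\sigma^p_0,\sigma^p_1,\dots)$ of finite functions with pairwise disjoint domains, $w^p(i),\sigma^p_j(i)\in{\bold H}(i)$, such that for some $m^*=m^*(p)<\omega$ there is a partition $\langle V^p_m:m^*\leq m<\omega\rangle$ of $\omega$ with $|V^p_m|\leq n^1_m2^{m^*}$ and $|\mathrm{dom}(\sigma^p_j)|\geq n^0_m/2^{m^*}$ for $j\in V^p_m$. $\mathrm{POS}(p)=\{\eta\in\prod_{i\in\omega}{\bold H}(i): w^p\subseteq\eta,\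 \sigma^p_j\not\subseteq\eta\text{ for all }j\}$, and $p\leq q$ iff $\mathrm{POS}(q)\subseteq\mathrm{POS}(p)$. *)

From Stdlib Require Import Reals Lra Lia Arith List.
Import ListNotations.
Open Scope R_scope.

Definition pfun (H : nat -> Type) : Type := forall i : nat, option (H i).

Definition in_dom {H : nat -> Type} (f : pfun H) (i : nat) : Prop := f i <> None.

Definition finite_fun {H : nat -> Type} (f : pfun H) : Prop :=
  exists N : nat, forall i : nat, (N <= i)%nat -> f i = None.

Definition pfun_sub {H : nat -> Type} (f g : pfun H) : Prop :=
  forall i (v : H i), f i = Some v -> g i = Some v.

Definition disjoint_dom {H : nat -> Type} (f g : pfun H) : Prop :=
  forall i, ~ (in_dom f i /\ in_dom g i).

Definition dom_card_ge {H : nat -> Type} (f : pfun H) (x : R) : Prop :=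
  exists l : list nat, NoDup l /\ (forall i, In i l -> in_dom f i) /\ x <= INR (length l).

Definition set_card_le (P : nat -> Prop) (k : nat) : Prop :=
  forall l : list nat, NoDup l -> (forall j, In j l -> P j) -> (length l <= k)%nat.

Fixpoint sum_lt (f : nat -> nat) (k : nat) : nat :=
  match k with
  | O => O
  | S k' => (sum_lt f k' + f k')%nat
  end.

Definition in_N (n0 n1 : nat -> nat) : Prop :=
  (forall m, 4 < n0 m /\ n0 m <= n1 m /\ n1 m < n0 (S m))%nat /\
  (forall mstar, (2 ^ (2 * (mstar + 2)) * sum_lt (fun m => n0 m * n1 m) mstar < n0 mstar)%nat) /\
  (forall M : R, exists K : nat, forall m : nat, (K <= m)%nat ->
      M < Rpower (INR (n1 m)) (/ (2 * INR (n0 m)))).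

Definition is_cond (H : nat -> Type) (n0 n1 : nat -> nat)
    (w : pfun H) (s : nat -> pfun H) : Prop :=
  finite_fun w /\ (forall j, finite_fun (s j)) /\
  (forall j, disjoint_dom w (s j)) /\
  (forall j k, j <> k -> disjoint_dom (s j) (s k)) /\
  exists mstar : nat, exists V : nat -> nat,
    (* V j = the index m of the block V_m containing j; the blocks
       <V_m : mstar <= m < omega> partition omega *)
    (forall j, (mstar <= V j)%nat) /\
    (forall m, (mstar <= m)%nat -> set_card_le (fun j => V j = m) (n1 m * 2 ^ mstar)) /\
    (forall j, dom_card_ge (s j) (INR (n0 (V j)) / 2 ^ mstar)).

Definition POS (H : nat -> Type) (w : pfun H) (s : nat -> pfun H)
    (eta : forall i : nat, H i) : Prop :=
  (forall i (v : H i), w i = Some v -> eta i = v) /\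
  (forall j, exists i (v : H i), s j i = Some v /\ eta i <> v).

Definition Qle (H : nat -> Type) (wp : pfun H) (sp : nat -> pfun H)
    (wq : pfun H) (sq : nat -> pfun H) : Prop :=
  forall eta, POS H wq sq eta -> POS H wp sp eta.

Definition countable_type (A : Type) : Prop :=
  exists f : A -> nat, forall x y, f x = f y -> x = y.

From Stdlib Require Import Reals Arith List.
From Stdlib Require Import Lra Lia Classical ClassicalEpsilon Eqdep_dec.

(* Since p <= q means POS(q) is included in POS(p), the order is a preorder,
   and the combinatorial condition clearly implies the inclusion.  Conversely,
   suppose the condition fails for p and q.  Every eta that extends w^q, copies
   a prescribed partial function C off dom(w^q), and elsewhere avoids the
   value of the (unique, by disjointness) sigma^q_j defined there lies in
   POS(q), as soon as each sigma^q_j has a point outside dom(w^q) where C does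
   not agree with it.  Choosing C to be a one-point function contradicting
   w^p, resp. sigma^p_i itself, produces an eta in POS(q) but not in POS(p).
   For the one-point C this needs a second point in dom(sigma^q_j), which
   exists since that domain has at least n^0_m / 2^{m^*} >= 2 points, the
   growth condition on n-bar forcing n^0_m > 2^m. *)

Section GrowthOfN.

Variables n0 n1 : nat -> nat.
Hypothesis hn : in_N n0 n1.

Lemma in_N_n0_mono a b : (a <= b)%nat -> (n0 a <= n0 b)%nat.
Proof.
  destruct hn as [hstep _].
  induction 1 as [|b _ IH]; [lia|].
  specialize (hstep b); lia.
Qed.

Lemma in_N_pow2_lt_n0 m : (2 ^ m < n0 m)%nat.
Proof.
  destruct hn as [hstep [hsum _]].
  destruct m as [|m].
  - specialize (hstep 0%nat); simpl; lia.
  - assert (hterm0 : (1 <= sum_lt (fun m => n0 m * n1 m) (S m))%nat).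
    { assert (h0 : (1 <= n0 0%nat * n1 0%nat)%nat) by (specialize (hstep 0%nat); nia).
      clear hsum; induction m as [|m IH]; simpl in *; lia. }
    assert (hpow : (2 ^ S m <= 2 ^ (2 * (S m + 2)))%nat)
      by (apply Nat.pow_le_mono_r; lia).
    specialize (hsum (S m)); nia.
Qed.

End GrowthOfN.

Lemma dom_card_ge_two_points (H : nat -> Type) (f : pfun H) (x : R) :
  dom_card_ge f x -> 1 < x ->
  exists k1 k2, k1 <> k2 /\ in_dom f k1 /\ in_dom f k2.
Proof.
  intros [l [hnodup [hdom hlen]]] hx.
  destruct l as [|k1 [|k2 l]]; simpl in hlen; try lra.
  exists k1, k2; split; [|split; apply hdom; simpl; auto].
  intros <-; apply NoDup_cons_iff in hnodup; apply (proj1 hnodup); simpl; auto.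
Qed.

Lemma is_cond_sigma_two_points (H : nat -> Type) n0 n1 (hn : in_N n0 n1) w s :
  is_cond H n0 n1 w s ->
  forall j, exists k1 k2, k1 <> k2 /\ in_dom (s j) k1 /\ in_dom (s j) k2.
Proof.
  intros [_ [_ [_ [_ [mstar [V [hV [_ hcard]]]]]]]] j.
  apply (dom_card_ge_two_points H (s j) _ (hcard j)).
  assert (hlt : (2 ^ mstar < n0 (V j))%nat).
  { eapply Nat.lt_le_trans; [apply (in_N_pow2_lt_n0 n0 n1 hn)|].
    apply (in_N_n0_mono n0 n1 hn), hV. }
  apply lt_INR in hlt; rewrite pow_INR in hlt.
  replace (INR 2) with 2 in hlt by (simpl; lra).
  assert (hpos : 0 < 2 ^ mstar) by (apply pow_lt; lra).
  apply Rmult_lt_reg_r with (2 ^ mstar); [lra|].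
  unfold Rdiv; rewrite Rmult_assoc, Rinv_l, Rmult_1_r, Rmult_1_l; lra.
Qed.

Section Generic.

Variable H : nat -> Type.

Lemma disjoint_dom_None (w f : pfun H) k v :
  disjoint_dom w f -> f k = Some v -> w k = None.
Proof.
  intros hdis hf; destruct (w k) eqn:hw; [|reflexivity].
  exfalso; apply (hdis k); unfold in_dom; split; congruence.
Qed.

Definition pfun_single (i : nat) (x : H i) : pfun H :=
  fun k => match Nat.eq_dec i k with
           | left e => Some (eq_rect i H x k e)
           | right _ => None
           end.

Lemma pfun_single_eq i x : pfun_single i x i = Some x.
Proof.
  unfold pfun_single; destruct (Nat.eq_dec i i) as [e|]; [|congruence].
  rewrite (UIP_refl_nat _ e); reflexivity.
Qed.

Lemma pfun_single_neq i x k : k <> i -> pfun_single i x k = None.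
Proof. unfold pfun_single; destruct (Nat.eq_dec i k); congruence. Qed.

Definition overlay (w C : pfun H) (d : forall k, H k) : forall k, H k :=
  fun k => match w k with
           | Some a => a
           | None => match C k with Some c => c | None => d k end
           end.

Lemma overlay_w w C d k a : w k = Some a -> overlay w C d k = a.
Proof. unfold overlay; intros ->; reflexivity. Qed.

Lemma overlay_C w C d k c : w k = None -> C k = Some c -> overlay w C d k = c.
Proof. unfold overlay; intros -> ->; reflexivity. Qed.

Hypothesis H2 : forall i, exists a b : H i, a <> b.

Lemma exists_neq i (v : H i) : exists x, x <> v.
Proof.
  destruct (H2 i) as [a [b hab]].
  destruct (classic (a = v)) as [<-|hav]; [exists b|exists a]; auto.
Qed.

Variable s : nat -> pfun H.
Hypothesis hs_disj : forall j k, j <> k -> disjoint_dom (s j) (s k).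

(* Two values suffice: by disjointness at most one sigma_j is defined at k. *)
Lemma exists_sigma_avoiding :
  exists d : forall k, H k, forall j k v, s j k = Some v -> d k <> v.
Proof.
  assert (hpt : forall k, exists x : H k, forall j v, s j k = Some v -> x <> v).
  { intro k.
    destruct (classic (exists j0 v0, s j0 k = Some v0)) as [[j0 [v0 h0]]|hnone].
    - destruct (exists_neq k v0) as [x hx]; exists x; intros j v hv.
      destruct (Nat.eq_dec j j0) as [->|hj].
      + congruence.
      + exfalso; apply (hs_disj j j0 hj k); unfold in_dom; split; congruence.
    - destruct (H2 k) as [x _]; exists x; intros j v hv.
      exfalso; eauto. }
  exists (fun k => proj1_sig (constructive_indefinite_description _ (hpt k))).
  intros j k v; apply (proj2_sig (constructive_indefinite_description _ (hpt k))).
Qed.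

Lemma overlay_POS (w C : pfun H) (d : forall k, H k) :
  (forall j k v, s j k = Some v -> d k <> v) ->
  (forall j, exists k v, s j k = Some v /\ w k = None /\ C k <> Some v) ->
  POS H w s (overlay w C d).
Proof.
  intros hd hC; split.
  - intros k a; apply overlay_w.
  - intros j; destruct (hC j) as [k [v [hsv [hw hCk]]]].
    exists k, v; split; [exact hsv|].
    destruct (C k) as [c|] eqn:hc.
    + rewrite (overlay_C w C d k c hw hc); congruence.
    + unfold overlay; rewrite hw, hc; apply (hd j k v hsv).
Qed.

Variable w : pfun H.
Hypothesis hws_disj : forall j, disjoint_dom w (s j).
Hypothesis hs_two : forall j, exists k1 k2, k1 <> k2 /\ in_dom (s j) k1 /\ in_dom (s j) k2.

Lemma Qle_pfun_sub wp sp : Qle H wp sp w s -> pfun_sub wp w.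
Proof.
  intros hle i v hv.
  destruct (exists_sigma_avoiding) as [d hd].
  destruct (exists_neq i v) as [x hx].
  assert (hpos : POS H w s (overlay w (pfun_single i x) d)).
  { apply overlay_POS; [exact hd|]; intros j.
    destruct (hs_two j) as [k1 [k2 [hk12 [hk1 hk2]]]].
    assert (hk : exists k, k <> i /\ in_dom (s j) k)
      by (destruct (Nat.eq_dec k1 i); [exists k2|exists k1]; split; congruence).
    destruct hk as [k [hki hk]]; unfold in_dom in hk.
    destruct (s j k) as [u|] eqn:hu; [|congruence].
    exists k, u; split; [exact hu|split].
    - apply (disjoint_dom_None w (s j) k u (hws_disj j) hu).
    - rewrite (pfun_single_neq i x k hki); discriminate. }
  pose proof (proj1 (hle _ hpos) i v hv) as hi.
  destruct (w i) as [a|] eqn:hw.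
  - rewrite (overlay_w w _ d i a hw) in hi; congruence.
  - rewrite (overlay_C w _ d i x hw (pfun_single_eq i x)) in hi; congruence.
Qed.

Lemma Qle_sigma_cases wp sp : Qle H wp sp w s -> forall i,
  (exists j, pfun_sub (s j) (sp i)) \/
  (exists m (a b : H m), w m = Some a /\ sp i m = Some b /\ a <> b).
Proof.
  intros hle i; apply NNPP; intros hnot; apply not_or_and in hnot.
  destruct hnot as [hnsub hnref].
  destruct (exists_sigma_avoiding) as [d hd].
  assert (hpos : POS H w s (overlay w (sp i) d)).
  { apply overlay_POS; [exact hd|]; intros j.
    assert (hj : ~ pfun_sub (s j) (sp i)) by eauto.
    apply not_all_ex_not in hj as [k hk]; apply not_all_ex_not in hk as [u hu].
    apply imply_to_and in hu as [hsu hspu].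
    exists k, u; split; [exact hsu|split; [|exact hspu]].
    apply (disjoint_dom_None w (s j) k u (hws_disj j) hsu). }
  destruct (proj2 (hle _ hpos) i) as [k [v [hspv hne]]].
  destruct (w k) as [a|] eqn:hw.
  - rewrite (overlay_w w _ d k a hw) in hne; apply hnref; exists k, a, v; auto.
  - apply hne, (overlay_C w _ d k v hw hspv).
Qed.

End Generic.

Lemma Qle_of_combinatorial (H : nat -> Type) wp sp wq sq :
  pfun_sub wp wq ->
  (forall i, (exists j, pfun_sub (sq j) (sp i)) \/
             (exists m (a b : H m), wq m = Some a /\ sp i m = Some b /\ a <> b)) ->
  Qle H wp sp wq sq.
Proof.
  intros hsub hi eta [hw hs]; split.
  - intros k v hv; apply hw, hsub, hv.
  - intros i; destruct (hi i) as [[j hj]|[m [a [b [ha [hb hab]]]]]].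
    + destruct (hs j) as [k [v [hk hne]]]; exists k, v; auto.
    + exists m, b; split; [exact hb|]; rewrite (hw m a ha); exact hab.
Qed.

Theorem proposition4p2 (H : nat -> Type)
  (HC : forall i, countable_type (H i))
  (H2 : forall i, exists a b : H i, a <> b)
  (n0 n1 : nat -> nat) (hn : in_N n0 n1) :
  (* (1) the order is a preorder on the conditions *)
  ((forall w s, is_cond H n0 n1 w s -> Qle H w s w s) /\
   (forall w1 s1 w2 s2 w3 s3,
      is_cond H n0 n1 w1 s1 -> is_cond H n0 n1 w2 s2 -> is_cond H n0 n1 w3 s3 ->
      Qle H w1 s1 w2 s2 -> Qle H w2 s2 w3 s3 -> Qle H w1 s1 w3 s3)) /\
  (* (2) combinatorial characterization of the order *)
  (forall wp sp wq sq,
      is_cond H n0 n1 wp sp -> is_cond H n0 n1 wq sq ->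
      (Qle H wp sp wq sq <->
       (pfun_sub wp wq /\
        forall i : nat,
          (exists j : nat, pfun_sub (sq j) (sp i)) \/
          (exists (m : nat) (a b : H m),
             wq m = Some a /\ sp i m = Some b /\ a <> b)))).
Proof.
  split; [split|].
  - intros w s _ eta h; exact h.
  - intros w1 s1 w2 s2 w3 s3 _ _ _ h12 h23 eta h; apply h12, h23, h.
  - intros wp sp wq sq _ hq.
    pose proof (is_cond_sigma_two_points H n0 n1 hn wq sq hq) as htwo.
    destruct hq as [_ [_ [hws [hss _]]]].
    split.
    + intros hle; split.
      * apply (Qle_pfun_sub H H2 sq hss wq hws htwo wp sp hle).
      * apply (Qle_sigma_cases H H2 sq hss wq hws wp sp hle).
    + intros [hsub hi]; apply Qle_of_combinatorial; assumption.
Qed.
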